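(* Let $F:\mathcal{D}\to\mathcal{C}$, $G:\mathcal{C}\to\mathcal{D}$ and $H:\mathcal{D}\to\mathcal{E}$ be functors, and assume that $G$ is a right adjoint or a left adjoint of $F$. If $H\circ G$ is naturally full and $F$ is separable, then $H$ is naturally full.
   Context: For a functor $F:\mathcal{A}\to\mathcal{B}$, let $\mathcal{F}:\mathrm{Hom}_{\mathcal{A}}(\bullet,\bullet)\to\mathrm{Hom}_{\mathcal{B}}(F(\bullet),F(\bullet))$ be the natural transformation (of functors $\mathcal{A}^{op}\times\mathcal{A}\to\mathbf{Sets}$) given by $\mathcal{F}_{A,A'}(f)=F(f)$. $F$ is called separable if there is a natural transformation $\mathcal{T}:\mathrm{Hom}_{\mathcal{B}}(F(\bullet),F(\bullet))\to\mathrm{Hom}_{\mathcal{A}}(\bullet,\bullet)$ with $\mathcal{T}\circ\mathcal{F}=\mathrm{id}$. $F$ is called naturally full if there is a natural transformation $\mathcal{P}:\mathrm{Hom}_{\mathcal{B}}(F(\bullet),F(\bullet))\to\mathrm{Hom}_{\mathcal{A}}(\bullet,\bullet)$ with $\mathcal{F}\circ\mathcal{P}=\mathrm{id}$, i.e. $F(\mathcal{P}_{A,A'}(u))=u$ for all $u:F(A)\to F(A')$, naturality meaning $\mathcal{P}_{X,T}(F(h)\circ g\circ F(f))=h\circ\mathcal{P}_{Y,Z}(g)\circ f$. *)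

(* Convention: [comp g f] is  g o f  (first f, then g). *)

Set Implicit Arguments.
Set Universe Polymorphism.

Record Category := {
  Ob :> Type;
  Hom : Ob -> Ob -> Type;
  idm : forall A, Hom A A;
  comp : forall A B C, Hom B C -> Hom A B -> Hom A C;
  comp_id_l : forall A B (f : Hom A B), comp (idm B) f = f;
  comp_id_r : forall A B (f : Hom A B), comp f (idm A) = f;
  comp_assoc : forall A B C D (h : Hom C D) (g : Hom B C) (f : Hom A B),
      comp h (comp g f) = comp (comp h g) f
}.

Arguments Hom {c} _ _.
Arguments idm {c} _.
Arguments comp {c A B C} _ _.

Record Functor (A B : Category) := {
  fobj :> A -> B;
  fmap : forall X Y : A, Hom X Y -> Hom (fobj X) (fobj Y);
  fmap_id : forall X : A, fmap X X (idm X) = idm (fobj X);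
  fmap_comp : forall (X Y Z : A) (g : Hom Y Z) (f : Hom X Y),
      fmap X Z (comp g f) = comp (fmap Y Z g) (fmap X Y f)
}.

Arguments fmap {A B} _ {X Y} _.

Definition Fcomp (A B C : Category) (H : Functor B C) (G : Functor A B)
  : Functor A C.
Proof.
  refine {| fobj := fun X => H (G X);
            fmap := fun X Y f => fmap H (fmap G f) |}.
  - intro X. rewrite fmap_id. apply fmap_id.
  - intros X Y Z g f. rewrite fmap_comp. apply fmap_comp.
Defined.

Definition is_left_adjoint (A B : Category) (L : Functor A B) (R : Functor B A)
  : Prop :=
  exists (eta : forall X : A, Hom X (R (L X)))
         (eps : forall Y : B, Hom (L (R Y)) Y),
    (forall (X X' : A) (f : Hom X X'),
        comp (eta X') f = comp (fmap R (fmap L f)) (eta X)) /\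
    (forall (Y Y' : B) (g : Hom Y Y'),
        comp g (eps Y) = comp (eps Y') (fmap L (fmap R g))) /\
    (forall X : A, comp (eps (L X)) (fmap L (eta X)) = idm (L X)) /\
    (forall Y : B, comp (fmap R (eps Y)) (eta (R Y)) = idm (R Y)).

Definition separable (A B : Category) (F : Functor A B) : Prop :=
  exists T : forall X Y : A, Hom (F X) (F Y) -> Hom X Y,
    (forall (X Y : A) (f : Hom X Y), T X Y (fmap F f) = f) /\
    (forall (X Y Z T' : A) (f : Hom X Y) (g : Hom (F Y) (F Z)) (h : Hom Z T'),
        T X T' (comp (fmap F h) (comp g (fmap F f))) = comp h (comp (T Y Z g) f)).

Definition naturally_full (A B : Category) (F : Functor A B) : Prop :=
  exists P : forall X Y : A, Hom (F X) (F Y) -> Hom X Y,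
    (forall (X Y : A) (u : Hom (F X) (F Y)), fmap F (P X Y u) = u) /\
    (forall (X Y Z T' : A) (f : Hom X Y) (g : Hom (F Y) (F Z)) (h : Hom Z T'),
        P X T' (comp (fmap F h) (comp g (fmap F f))) = comp h (comp (P Y Z g) f)).

(* A separable functor F with an adjoint G makes the identity of D a natural
   retract of GF (Rafael's criterion): if F -| G, the unit eta splits via
   T(eps_F); if G -| F, the counit eps is split by T(eta_F).  Given
   alpha : Id => GF and beta : GF => Id with beta o alpha = id, a natural
   preimage P for HG yields one for H, namely
   u |-> beta o G(P(H alpha o u o H beta)) o alpha. *)


Set Implicit Arguments.

Definition identity_natural_retract (D : Category) (K : Functor D D) : Prop :=
  exists (alpha : forall X : D, Hom X (K X)) (beta : forall X : D, Hom (K X) X),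
    (forall (X Y : D) (f : Hom X Y), comp (alpha Y) f = comp (fmap K f) (alpha X)) /\
    (forall (X Y : D) (f : Hom X Y), comp f (beta X) = comp (beta Y) (fmap K f)) /\
    (forall X : D, comp (beta X) (alpha X) = idm X).

Section SeparableNaturality.

Context {A B : Category} {F : Functor A B}
  {T : forall X Y : A, Hom (F X) (F Y) -> Hom X Y}.
Hypothesis T_natural :
  forall (X Y Z W : A) (f : Hom X Y) (g : Hom (F Y) (F Z)) (h : Hom Z W),
    T X W (comp (fmap F h) (comp g (fmap F f))) = comp h (comp (T Y Z g) f).

Lemma T_natural_l (X Y Z : A) (g : Hom (F X) (F Y)) (h : Hom Y Z) :
  T X Z (comp (fmap F h) g) = comp h (T X Y g).
Proof.
  pose proof (T_natural _ _ _ _ (idm X) g h) as E.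
  now rewrite fmap_id, !comp_id_r in E.
Qed.

Lemma T_natural_r (X Y Z : A) (f : Hom X Y) (g : Hom (F Y) (F Z)) :
  T X Z (comp g (fmap F f)) = comp (T Y Z g) f.
Proof.
  pose proof (T_natural _ _ _ _ f g (idm Z)) as E.
  now rewrite fmap_id, !comp_id_l in E.
Qed.

End SeparableNaturality.

Lemma separable_left_adjoint_retract (C D : Category)
  (F : Functor D C) (G : Functor C D) :
  is_left_adjoint F G -> separable F -> identity_natural_retract (Fcomp G F).
Proof.
  intros [eta [eps [eta_nat [eps_nat [triangle_F _]]]]] [T [T_fmap T_nat]].
  exists eta, (fun X => T _ _ (eps (F X))).
  split; [exact eta_nat | split].
  - intros X Y f; simpl.
    rewrite <- (T_natural_l T_nat), eps_nat.
    apply (T_natural_r T_nat).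
  - intro X.
    rewrite <- (T_natural_r T_nat), triangle_F, <- fmap_id.
    apply T_fmap.
Qed.

Lemma separable_right_adjoint_retract (C D : Category)
  (F : Functor D C) (G : Functor C D) :
  is_left_adjoint G F -> separable F -> identity_natural_retract (Fcomp G F).
Proof.
  intros [eta [eps [eta_nat [eps_nat [_ triangle_F]]]]] [T [T_fmap T_nat]].
  exists (fun X => T _ _ (eta (F X))), eps.
  split; [| split; [exact eps_nat |]].
  - intros X Y f; simpl.
    rewrite <- (T_natural_r T_nat), eta_nat.
    apply (T_natural_l T_nat).
  - intro X.
    rewrite <- (T_natural_l T_nat), triangle_F, <- fmap_id.
    apply T_fmap.
Qed.

Section RetractTransfer.

Context {C D E : Category} {F : Functor D C} {G : Functor C D} {H : Functor D E}
  {alpha : forall X : D, Hom X (G (F X))} {beta : forall X : D, Hom (G (F X)) X}.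
Hypothesis alpha_natural :
  forall (X Y : D) (f : Hom X Y), comp (alpha Y) f = comp (fmap G (fmap F f)) (alpha X).
Hypothesis beta_natural :
  forall (X Y : D) (f : Hom X Y), comp f (beta X) = comp (beta Y) (fmap G (fmap F f)).
Hypothesis beta_alpha : forall X : D, comp (beta X) (alpha X) = idm X.

Definition retract_conj {X Y : D} (u : Hom (H X) (H Y)) :
  Hom (H (G (F X))) (H (G (F Y))) :=
  comp (fmap H (alpha Y)) (comp u (fmap H (beta X))).

Lemma fmap_beta_alpha (X : D) :
  comp (fmap H (beta X)) (fmap H (alpha X)) = idm (H X).
Proof. now rewrite <- fmap_comp, beta_alpha, fmap_id. Qed.

Lemma retract_conj_natural (X Y Z W : D) (f : Hom X Y) (g : Hom (H Y) (H Z))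
  (h : Hom Z W) :
  retract_conj (comp (fmap H h) (comp g (fmap H f)))
  = comp (fmap H (fmap G (fmap F h))) (comp (retract_conj g) (fmap H (fmap G (fmap F f)))).
Proof.
  unfold retract_conj.
  rewrite !comp_assoc, <- !fmap_comp, alpha_natural.
  rewrite <- !comp_assoc, <- !fmap_comp, beta_natural.
  now rewrite !fmap_comp, !comp_assoc.
Qed.

Lemma naturally_full_of_retract : naturally_full (Fcomp H G) -> naturally_full H.
Proof.
  intros [P [P_section P_natural]]; simpl in P_section, P_natural.
  exists (fun X Y u =>
    comp (beta Y) (comp (fmap G (P (F X) (F Y) (retract_conj u))) (alpha X))).
  split.
  - intros X Y u.
    rewrite !fmap_comp, P_section; unfold retract_conj.
    rewrite !comp_assoc, fmap_beta_alpha, comp_id_l.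
    now rewrite <- !comp_assoc, fmap_beta_alpha, comp_id_r.
  - intros X Y Z W f g h.
    rewrite retract_conj_natural, P_natural, !fmap_comp.
    now rewrite !comp_assoc, <- beta_natural, <- !comp_assoc, <- alpha_natural.
Qed.

End RetractTransfer.

Lemma naturally_full_of_identity_retract (C D E : Category)
  (F : Functor D C) (G : Functor C D) (H : Functor D E) :
  identity_natural_retract (Fcomp G F) ->
  naturally_full (Fcomp H G) -> naturally_full H.
Proof.
  intros [alpha [beta [alpha_nat [beta_nat beta_alpha]]]].
  exact (naturally_full_of_retract alpha_nat beta_nat beta_alpha).
Qed.

Theorem proposition2p4 (C D E : Category)
  (F : Functor D C) (G : Functor C D) (H : Functor D E) :
  (is_left_adjoint F G \/ is_left_adjoint G F) ->
  naturally_full (Fcomp H G) ->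
  separable F ->
  naturally_full H.
Proof.
  intros adjoint HG_full F_separable.
  assert (retract : identity_natural_retract (Fcomp G F)).
  { destruct adjoint as [F_left | F_right].
    - exact (separable_left_adjoint_retract F_left F_separable).
    - exact (separable_right_adjoint_retract F_right F_separable). }
  exact (naturally_full_of_identity_retract retract HG_full).
Qed.
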